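(* Let $(A,\vee,\perp,0)$ be a quasi-orthomodular nearsemilattice, and define a partial binary operation $\oplus$ on $A$ by: $x \oplus y = z$ if and only if $x \perp y$ and $z = x \vee y$. Then $(A,\oplus,0)$ is a generalized orthoalgebra, and its natural ordering coincides with the nearsemilattice ordering of $A$.
   Context: A nearsemilattice is a poset $A$ with least element $0$ in which any two elements having a common upper bound have a join $x \vee y$ (a partial operation). An orthogonality on $A$ is a binary relation $\perp$ with: $x \perp y$ implies $y \perp x$; $x \le y$ and $y \perp z$ imply $x \perp z$; $x \perp 0$ for all $x$. A quasi-orthomodular nearsemilattice is a nearsemilattice with an orthogonality such that: (a) if $x \perp y$ then $x \vee y$ exists; (b) if $x \le y$ then $y = x \vee z$ for some $z$ with $x \perp z$; (c) if $x \perp y$, $x \perp z$ and $y \le x \vee z$, then $y \le z$. A generalized orthoalgebra is a system $(A,\oplus,0)$ with $\oplus$ a partial binary operation (write $s \perp t$ to mean $s \oplus t$ is defined) satisfying: (1) if $x \perp y$ then $y \perp x$ and $x \oplus y = y \oplus x$; (2) if $x \perp y$ and $x \oplus y \perp z$, then $y \perp z$, $x \perp y \oplus z$ and $(x \oplus y) \oplus z = x \oplus (y \oplus z)$; (3) $x \perp 0$ and $x \oplus 0 = x$; (4) if $x \perp y$, $x \perp z$ and $x \oplus y = x \oplus z$, then $y = z$; (5) if $x \perp x$ then $x = 0$. Its natural ordering is: $x \le y$ iff $y = x \oplus z$ for some $z$ with $x \perp z$. *)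

(* Plain Rocq (no library needed). Partial binary operations are represented
   by their graphs: [op x y z] means "x (+) y is defined and equals z". *)

Section Defs.
Variable T : Type.

Definition is_poset (le : T -> T -> Prop) : Prop :=
  (forall x, le x x) /\
  (forall x y, le x y -> le y x -> x = y) /\
  (forall x y z, le x y -> le y z -> le x z).

Definition is_ub (le : T -> T -> Prop) (x y u : T) : Prop := le x u /\ le y u.

Definition is_join (le : T -> T -> Prop) (x y z : T) : Prop :=
  is_ub le x y z /\ (forall u, is_ub le x y u -> le z u).

Definition nearsemilattice (le : T -> T -> Prop) (zero : T) : Prop :=
  is_poset le /\
  (forall x, le zero x) /\
  (forall x y, (exists u, is_ub le x y u) -> exists z, is_join le x y z).

Definition orthogonality (le : T -> T -> Prop) (zero : T)
  (orth : T -> T -> Prop) : Prop :=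
  (forall x y, orth x y -> orth y x) /\
  (forall x y z, le x y -> orth y z -> orth x z) /\
  (forall x, orth x zero).

Definition quasi_orthomodular_nearsemilattice (le : T -> T -> Prop) (zero : T)
  (orth : T -> T -> Prop) : Prop :=
  nearsemilattice le zero /\
  orthogonality le zero orth /\
  (forall x y, orth x y -> exists z, is_join le x y z) /\
  (forall x y, le x y -> exists z, orth x z /\ is_join le x z y) /\
  (forall x y z, orth x y -> orth x z ->
               (exists w, is_join le x z w /\ le y w) -> le y z).

Definition partial_op (op : T -> T -> T -> Prop) : Prop :=
  forall x y z z', op x y z -> op x y z' -> z = z'.

Definition generalized_orthoalgebra (op : T -> T -> T -> Prop) (zero : T) : Prop :=
  partial_op op /\
  (forall x y z, op x y z -> op y x z) /\
  (* (2) x _|_ y, (x (+) y) _|_ z -> y _|_ z, x _|_ (y (+) z),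
         (x (+) y) (+) z = x (+) (y (+) z) *)
  (forall x y u z w, op x y u -> op u z w ->
      exists v, op y z v /\ op x v w) /\
  (forall x, op x zero x) /\
  (forall x y z u, op x y u -> op x z u -> y = z) /\
  (forall x u, op x x u -> x = zero).

Definition goa_le (op : T -> T -> T -> Prop) (x y : T) : Prop :=
  exists z, op x z y.

Definition qonsl_oplus (le : T -> T -> Prop) (orth : T -> T -> Prop)
  (x y z : T) : Prop :=
  orth x y /\ is_join le x y z.

End Defs.


(* Commutativity, the unit law and (5) are immediate, and cancellation (4) is
   axiom (c) applied in both directions.  For associativity, let u = x \/ y
   and w = u \/ z with x _|_ y and u _|_ z, and put v = y \/ z <= w.  Axiom (b)
   writes w = v \/ t with v _|_ t; axiom (c) gives t <= u and then t <= x.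
   Writing x = t \/ s with t _|_ s, axiom (c) twice more gives s <= v and
   s <= z; since also s <= x _|_ z, s is self-orthogonal, hence s = 0 and
   x = t.  So x _|_ v and w = x \/ v. *)

Section Joins.
Variables (T : Type) (le : T -> T -> Prop).

Lemma is_join_sym x y z : is_join T le x y z -> is_join T le y x z.
Proof.
  intros [[Hx Hy] Hleast]. split; [split; assumption|].
  intros u [Hyu Hxu]. apply Hleast. split; assumption.
Qed.

Lemma is_join_unique x y z z' :
  (forall x y, le x y -> le y x -> x = y) ->
  is_join T le x y z -> is_join T le x y z' -> z = z'.
Proof.
  intros antisym [Hub Hleast] [Hub' Hleast']. apply antisym; auto.
Qed.

Lemma is_join_bottom_r zero x :
  le x x -> le zero x -> is_join T le x zero x.
Proof.
  intros Hrefl Hzero. split; [split; assumption|]. intros u [Hxu _]. exact Hxu.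
Qed.

End Joins.

Section QuasiOrthomodular.
Variables (T : Type) (le : T -> T -> Prop) (zero : T) (orth : T -> T -> Prop).
Hypothesis Q : quasi_orthomodular_nearsemilattice T le zero orth.

Lemma le_refl x : le x x.
Proof. destruct Q as [[[refl _] _] _]. apply refl. Qed.

Lemma le_antisym x y : le x y -> le y x -> x = y.
Proof. destruct Q as [[[_ [antisym _]] _] _]. apply antisym. Qed.

Lemma le_trans x y z : le x y -> le y z -> le x z.
Proof. destruct Q as [[[_ [_ trans]] _] _]. apply trans. Qed.

Lemma zero_le x : le zero x.
Proof. destruct Q as [[_ [bot _]] _]. apply bot. Qed.

Lemma orth_sym x y : orth x y -> orth y x.
Proof. destruct Q as [_ [[sym _] _]]. apply sym. Qed.

Lemma orth_le_l x y z : le x y -> orth y z -> orth x z.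
Proof. destruct Q as [_ [[_ [down _]] _]]. apply down. Qed.

Lemma orth_zero x : orth x zero.
Proof. destruct Q as [_ [[_ [_ o0]] _]]. apply o0. Qed.

Lemma orth_join x y : orth x y -> exists z, is_join T le x y z.
Proof. destruct Q as [_ [_ [Ha _]]]. apply Ha. Qed.

Lemma le_orth_complement x y :
  le x y -> exists z, orth x z /\ is_join T le x z y.
Proof. destruct Q as [_ [_ [_ [Hb _]]]]. apply Hb. Qed.

Lemma le_of_orth_join x y z w :
  orth x y -> orth x z -> is_join T le x z w -> le y w -> le y z.
Proof.
  destruct Q as [_ [_ [_ [_ Hc]]]]. intros Hxy Hxz Hw Hyw.
  apply (Hc x y z Hxy Hxz). exists w. split; assumption.
Qed.

Lemma orth_le_r x y z : orth x y -> le z y -> orth x z.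
Proof.
  intros Hxy Hzy. apply orth_sym, (orth_le_l z y x Hzy), orth_sym, Hxy.
Qed.

Lemma orth_self_eq_zero s : orth s s -> s = zero.
Proof.
  intros Hss. apply le_antisym; [|apply zero_le].
  apply (le_of_orth_join s s zero s Hss (orth_zero s)).
  - apply is_join_bottom_r; [apply le_refl | apply zero_le].
  - apply le_refl.
Qed.

Lemma le_orth_eq_zero s z : le s z -> orth s z -> s = zero.
Proof.
  intros Hsz Hos. apply orth_self_eq_zero, (orth_le_r s z s Hos Hsz).
Qed.

Notation oplus := (qonsl_oplus T le orth).

Lemma qonsl_oplus_functional : partial_op T oplus.
Proof.
  intros x y z z' [_ Hz] [_ Hz']. exact (is_join_unique T le x y z z' le_antisym Hz Hz').
Qed.

Lemma qonsl_oplus_comm x y z : oplus x y z -> oplus y x z.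
Proof. intros [Hxy Hz]. split; [apply orth_sym, Hxy | apply is_join_sym, Hz]. Qed.

Lemma qonsl_oplus_zero_r x : oplus x zero x.
Proof. split; [apply orth_zero | apply is_join_bottom_r; [apply le_refl | apply zero_le]]. Qed.

Lemma qonsl_oplus_cancel x y z u : oplus x y u -> oplus x z u -> y = z.
Proof.
  intros [Hxy Hy] [Hxz Hz].
  apply le_antisym.
  - exact (le_of_orth_join x y z u Hxy Hxz Hz (proj2 (proj1 Hy))).
  - exact (le_of_orth_join x z y u Hxz Hxy Hy (proj2 (proj1 Hz))).
Qed.

Lemma qonsl_oplus_assoc x y u z w :
  oplus x y u -> oplus u z w -> exists v, oplus y z v /\ oplus x v w.
Proof.
  intros [Hxy Hu] [Huz Hw].
  destruct Hu as [[Hxu Hyu] Hu_least]. destruct Hw as [[Huw Hzw] Hw_least].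
  assert (Hyz : orth y z) by exact (orth_le_l y u z Hyu Huz).
  assert (Hxz : orth x z) by exact (orth_le_l x u z Hxu Huz).
  destruct (orth_join y z Hyz) as [v Hv].
  assert (Hvw : le v w).
  { apply (proj2 Hv). split; [apply (le_trans y u w Hyu Huw) | exact Hzw]. }
  destruct (le_orth_complement v w Hvw) as [t [Hvt Hw_vt]].
  assert (Htw : le t w) by exact (proj2 (proj1 Hw_vt)).
  assert (Htu : le t u).
  { apply (le_of_orth_join z t u w).
    - exact (orth_le_l z v t (proj2 (proj1 Hv)) Hvt).
    - exact (orth_sym u z Huz).
    - apply is_join_sym. split; [split; assumption | exact Hw_least].
    - exact Htw. }
  assert (Htx : le t x).
  { apply (le_of_orth_join y t x u).
    - exact (orth_le_l y v t (proj1 (proj1 Hv)) Hvt).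
    - exact (orth_sym x y Hxy).
    - apply is_join_sym. split; [split; assumption | exact Hu_least].
    - exact Htu. }
  destruct (le_orth_complement t x Htx) as [s [Hts Hx_ts]].
  assert (Hsx : le s x) by exact (proj2 (proj1 Hx_ts)).
  assert (Hsv : le s v).
  { apply (le_of_orth_join t s v w Hts (orth_sym v t Hvt)).
    - exact (is_join_sym T le v t w Hw_vt).
    - exact (le_trans s x w Hsx (le_trans x u w Hxu Huw)). }
  assert (Hsz : le s z).
  { apply (le_of_orth_join y s z v); [| exact Hyz | exact Hv | exact Hsv].
    exact (orth_sym s y (orth_le_l s x y Hsx Hxy)). }
  assert (Hs0 : s = zero) by exact (le_orth_eq_zero s z Hsz (orth_le_l s x z Hsx Hxz)).
  subst s.
  assert (Hxt : x = t).
  { apply (is_join_unique T le t zero x t le_antisym Hx_ts).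
    apply is_join_bottom_r; [apply le_refl | apply zero_le]. }
  subst t.
  exists v. split; [split; assumption |].
  split; [exact (orth_sym v x Hvt) | exact (is_join_sym T le v x w Hw_vt)].
Qed.

Lemma qonsl_oplus_self_eq_zero x u : oplus x x u -> x = zero.
Proof. intros [Hxx _]. exact (orth_self_eq_zero x Hxx). Qed.

Lemma goa_le_qonsl_oplus x y : goa_le T oplus x y <-> le x y.
Proof.
  split.
  - intros [z [_ [[Hxy _] _]]]. exact Hxy.
  - intros Hxy. destruct (le_orth_complement x y Hxy) as [z Hz]. exists z. exact Hz.
Qed.

End QuasiOrthomodular.

Theorem theorem3 (T : Type) (le : T -> T -> Prop) (zero : T)
  (orth : T -> T -> Prop) :
  quasi_orthomodular_nearsemilattice T le zero orth ->
  generalized_orthoalgebra T (qonsl_oplus T le orth) zero /\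
  (forall x y, goa_le T (qonsl_oplus T le orth) x y <-> le x y).
Proof.
  intros Q. split.
  - split; [|split; [|split; [|split; [|split]]]].
    + exact (qonsl_oplus_functional T le zero orth Q).
    + exact (qonsl_oplus_comm T le zero orth Q).
    + exact (qonsl_oplus_assoc T le zero orth Q).
    + exact (qonsl_oplus_zero_r T le zero orth Q).
    + exact (qonsl_oplus_cancel T le zero orth Q).
    + exact (qonsl_oplus_self_eq_zero T le zero orth Q).
  - exact (goa_le_qonsl_oplus T le zero orth Q).
Qed.
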